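(* Let $(\mathcal S,\mathcal A,P,r)$ be any finite MDP (general/multichain) and let $(g^\star,h^\star)$ be a solution of the modified Bellman equations. Let $V^0\in\mathbb R^n$ and let $V^k=\tfrac12 V^{k-1}+\tfrac12 TV^{k-1}$ for $k\ge 1$ (Relaxed Value Iteration with $\lambda_k=1/2$), and for each $k$ let $\pi_k$ be a greedy policy, i.e. $T^{\pi_k}V^k=TV^k$. Let $\mathcal D$ be the set of all deterministic policies and \[\epsilon=\inf_{\pi\in\mathcal D\setminus\{\pi\,:\,\mathcal P^{\pi}g^\star=g^\star\}}\|\mathcal P^{\pi}g^\star-g^\star\|_\infty\in(0,\infty],\] with the convention $\epsilon=+\infty$ if the index set is empty, and let $K=\big(2\|r\|_\infty+4\|V^0\|_\infty+16\|V^0-h^\star\|_\infty+2\|g^\star\|_\infty\big)/\epsilon$. Then for every $k>K$, \[\|g^\star-g^{\pi_k}\|_\infty\le\|TV^k-V^k-g^\star\|_\infty\le\frac{4\|V^0-h^\star\|_\infty}{\sqrt{\varpi\,(k-K)}},\] where $\varpi=3.141592\ldots$ is the circle constant.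
   Context: An MDP $(\mathcal S,\mathcal A,P,r)$ has finite state space $\mathcal S$ with $|\mathcal S|=n$ (functions on $\mathcal S$ are identified with vectors in $\mathbb R^n$), finite action space $\mathcal A$, transition probabilities $P(s'\mid s,a)$ and bounded reward $r:\mathcal S\times\mathcal A\to\mathbb R$, $\|r\|_\infty=\max_{s,a}|r(s,a)|$. A policy $\pi$ assigns to each state a distribution $\pi(\cdot\mid s)$ on $\mathcal A$; $r^\pi(s)=\sum_a\pi(a\mid s)r(s,a)$ and $\mathcal P^\pi(s,s')=\sum_a\pi(a\mid s)P(s'\mid s,a)$. The average reward of $\pi$ is $g^\pi(s)=\liminf_{T\to\infty}\frac1T\mathbb E_\pi[\sum_{t=0}^{T-1}r(s_t,a_t)\mid s_0=s]$ and $g^\star(s)=\max_\pi g^\pi(s)$. The Bellman consistency operator is $T^\pi V=r^\pi+\mathcal P^\pi V$ and the Bellman optimality operator is $(TV)(s)=\max_{a}\{r(s,a)+\sum_{s'}P(s'\mid s,a)V(s')\}$. A pair $(g,h)\in\mathbb R^n\times\mathbb R^n$ solves the modified Bellman equations if $\max_a\sum_{s'}P(s'\mid s,a)g(s')=g(s)$ and $\max_a\{r(s,a)+\sum_{s'}P(s'\mid s,a)h(s')\}=h(s)+g(s)$ for all $s$, and some policy attains both maxima simultaneously; solutions exist and the first component of any solution equals $g^\star$. A policy is deterministic if each $\pi(\cdot\mid s)$ is a point mass. *)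

From HB Require Import structures.
From mathcomp Require Import all_boot all_order all_algebra.
From mathcomp Require Import all_classical all_reals all_analysis.
Set Implicit Arguments. Unset Strict Implicit. Unset Printing Implicit Defensive.
Import Order.TTheory GRing.Theory Num.Theory.
Local Open Scope classical_set_scope.
Local Open Scope ring_scope.

Section MDP.
Variables (R : realType) (n : nat) (A : finType).
Variable P : 'I_n -> A -> 'I_n -> R.   (* P s a s' = P(s' | s, a) *)
Variable r : 'I_n -> A -> R.

Definition supnorm (v : 'I_n -> R) : R := \big[Num.max/0]_(s : 'I_n) `|v s|.

Definition is_transition : Prop :=
  (forall s a s', 0 <= P s a s') /\ (forall s a, \sum_(s' : 'I_n) P s a s' = 1).

Definition rnorm : R := \big[Num.max/0]_(s : 'I_n) \big[Num.max/0]_(a : A) `|r s a|.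

(* a (stationary, randomized) policy: pi s a = pi(a | s) *)
Definition is_policy (pi : 'I_n -> A -> R) : Prop :=
  (forall s a, 0 <= pi s a) /\ (forall s, \sum_(a : A) pi s a = 1).

Definition is_deterministic (pi : 'I_n -> A -> R) : Prop :=
  is_policy pi /\ forall s, exists a0 : A, forall a, pi s a = (a == a0)%:R.

Definition rpi (pi : 'I_n -> A -> R) (s : 'I_n) : R := \sum_(a : A) pi s a * r s a.

Definition Ppi (pi : 'I_n -> A -> R) (V : 'I_n -> R) (s : 'I_n) : R :=
  \sum_(s' : 'I_n) (\sum_(a : A) pi s a * P s a s') * V s'.

Definition Tpi (pi : 'I_n -> A -> R) (V : 'I_n -> R) (s : 'I_n) : R :=
  rpi pi s + Ppi pi V s.

(* max over the (nonempty, witnessed by a0) finite action set *)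
Definition amax (a0 : A) (f : A -> R) : R := \big[Num.max/f a0]_(a : A) f a.

Definition Topt (a0 : A) (V : 'I_n -> R) (s : 'I_n) : R :=
  amax a0 (fun a => r s a + \sum_(s' : 'I_n) P s a s' * V s').

(* average reward g^pi(s) = liminf_T (1/T) E_pi[sum_{t<T} r(s_t,a_t) | s_0 = s],
   where E_pi[r(s_t,a_t) | s_0 = s] = ((P^pi)^t r^pi)(s) *)
Definition gpi (pi : 'I_n -> A -> R) (s : 'I_n) : R :=
  limn_inf (fun T : nat =>
    (T%:R)^-1 * \sum_(t < T) (iter t (Ppi pi) (rpi pi)) s).

Definition modified_bellman (a0 : A) (g h : 'I_n -> R) : Prop :=
  (forall s, amax a0 (fun a => \sum_(s' : 'I_n) P s a s' * g s') = g s) /\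
  (forall s, Topt a0 h s = h s + g s) /\
  exists pi, is_policy pi /\
    (forall s, Ppi pi g s = amax a0 (fun a => \sum_(s' : 'I_n) P s a s' * g s')) /\
    (forall s, Tpi pi h s = Topt a0 h s).

Definition RVI (a0 : A) (V0 : 'I_n -> R) (k : nat) : 'I_n -> R :=
  iter k (fun V s => 2^-1 * V s + 2^-1 * Topt a0 V s) V0.

(* epsilon = inf over deterministic policies with P^pi g <> g of ||P^pi g - g||,
   as an extended real (inf of the empty set is +oo) *)
Definition eps_gap (g : 'I_n -> R) : \bar R :=
  ereal_inf [set (supnorm (fun s => Ppi pi g s - g s))%:E |
              pi in [set pi | is_deterministic pi /\ Ppi pi g <> g]].

(* K = C / epsilon, with C / +oo = 0 *)
Definition Kconst (g h V0 : 'I_n -> R) : R :=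
  let C := 2 * rnorm + 4 * supnorm V0 + 16 * supnorm (fun s => V0 s - h s)
           + 2 * supnorm g in
  match eps_gap g with
  | EFin e => C / e
  | _ => 0
  end.
End MDP.

(* Write [V_k = W_k + (k / 2) g].  The shifted iterates satisfy
   [W_(k+1) = (W_k + Y_k) / 2] with [Y_k = T V_k - (k / 2 + 1) g], and they
   stay within [|V_0 - h|] of [h].  A greedy action at [V_k] that loses [eps]
   on [g] would cost [k eps / 2], more than [W_k] can compensate once [k > K];
   so from then on greedy actions preserve [g], which makes [Y] nonexpansive
   in [W].  The residual [T V_k - V_k - g = Y_k - W_k] then obeys the
   Krasnoselskii-Mann rate for step [1/2], a central binomial probability
   bounded through Wallis' inequality [C(2m, m) / 4^m <= 1 / sqrt (pi m)].
   Finally the greedy policy fixes [g], and averaging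
   [r^pi = g + E + (V - P^pi V)] along its iterates bounds [g - g^pi] by the
   residual [E]. *)

From HB Require Import structures.
From mathcomp Require Import all_boot all_order all_algebra.
From mathcomp Require Import all_classical all_reals all_analysis.
From mathcomp Require Import ring lra zify.
Import Order.TTheory GRing.Theory Num.Theory.
Set Implicit Arguments. Unset Strict Implicit. Unset Printing Implicit Defensive.
Local Open Scope ring_scope.

Lemma bin_odd_middle m : 'C(m.*2.+1, m.+1) = 'C(m.*2.+1, m).
Proof.
have -> : m.+1 = (m.*2.+1 - m)%N by rewrite -addnn; lia.
by rewrite bin_sub // -addnn; lia.
Qed.

Lemma central_binomialS m :
  (m.+1 * 'C(m.+1.*2, m.+1) = 2 * m.*2.+1 * 'C(m.*2, m))%N.
Proof.
have e1 := mul_bin_diag m.+1.*2 m.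
have e2 := mul_bin_diag m.*2.+1 m.
move: e1 e2; rewrite bin_odd_middle -!addnn !addSn !addnS /=.
nia.
Qed.

Section CentralBinomial.
Variable R : numFieldType.

Definition central_binomial_ratio (m : nat) : R := 'C(m.*2, m)%:R / 4 ^+ m.

Lemma central_binomial_ratioS m : central_binomial_ratio m.+1 =
  central_binomial_ratio m * (m.*2.+1%:R / m.*2.+2%:R).
Proof.
have m1 : m.+1%:R != 0 :> R by rewrite pnatr_eq0.
have e : 'C(m.+1.*2, m.+1)%:R = 2 * m.*2.+1%:R * 'C(m.*2, m)%:R / m.+1%:R :> R.
  by apply: (mulIf m1); rewrite mulfVK // mulrC -!natrM central_binomialS.
have -> : m.*2.+2%:R = 2 * m.+1%:R :> R by rewrite -natrM mul2n doubleS.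
have h4 : 4 ^+ m != 0 :> R by rewrite expf_neq0.
rewrite /central_binomial_ratio e exprS; field.
by rewrite h4 addrC natr1 m1.
Qed.

Lemma central_binomial_ratio_gt0 m : 0 < central_binomial_ratio m.
Proof. by rewrite divr_gt0 ?exprn_gt0 // ltr0n bin_gt0 -addnn leq_addl. Qed.
End CentralBinomial.

Section BinomialWindow.
Variable R : numFieldType.

Definition binom_cdf (m j : nat) : nat := \sum_(i < j) 'C(m, i).

Lemma binom_cdf0 m : binom_cdf m 0 = 0%N.
Proof. by rewrite /binom_cdf big_ord0. Qed.

Lemma binom_cdfSS m j : binom_cdf m.+1 j.+1 = (binom_cdf m j.+1 + binom_cdf m j)%N.
Proof.
rewrite /binom_cdf !big_ord_recl /=; under eq_bigr do rewrite binS.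
by rewrite big_split /= !bin0 addnA.
Qed.

Lemma binom_cdf_full m : binom_cdf m m.+1 = (2 ^ m)%N.
Proof.
elim: m => [|m IH]; first by rewrite /binom_cdf big_ord1.
have e : binom_cdf m m.+2 = binom_cdf m m.+1.
  by rewrite {1}/binom_cdf big_ord_recr /= bin_small // addn0.
by rewrite binom_cdfSS e IH expnS mul2n addnn.
Qed.

(* [km_xx a b] is the probability that a binomial variable of parameters
   [(a + b, 1/2)] lies in [[a, b)]. *)
Definition km_xx (a b : nat) : R :=
  ((binom_cdf (a + b) b)%:R - (binom_cdf (a + b) a)%:R) / 2 ^+ (a + b).

Definition km_yx (c a : nat) : R := if a is a'.+1 then km_xx a' c.+1 else 1.

Lemma km_xx_refl a : km_xx a a = 0.
Proof. by rewrite /km_xx subrr mul0r. Qed.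

Lemma km_xxS a b : km_xx a b.+1 = 2^-1 * km_xx a b + 2^-1 * km_yx b a.
Proof.
have h2 k : (2 : R) ^+ k != 0 by rewrite expf_neq0.
case: a => [|a] /=.
  rewrite /km_xx !add0n !binom_cdf0 !subr0 binom_cdfSS binom_cdf_full.
  by rewrite natrD natrX exprS; field; rewrite h2.
rewrite /km_xx !addSn !addnS !binom_cdfSS !natrD exprS.
by field; rewrite h2.
Qed.

Lemma km_yx_diag k : km_yx k k = 2 * central_binomial_ratio R k.+1.
Proof.
case: k => [|k] /=.
  by rewrite /central_binomial_ratio /= bin1 expr1 -[1.*2%:R]/(2 : R); field.
have num : (binom_cdf k.+1.*2 k.+2)%:R - (binom_cdf k.+1.*2 k)%:R =
    'C(k.+1.*2.+1, k.+1)%:R :> R.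
  by rewrite /binom_cdf !big_ord_recr /= binS !natrD; ring.
have e4 : 2 ^+ k.+1.*2 = 4 ^+ k.+1 :> R by rewrite -mul2n exprM expr2 -natrM.
rewrite /km_xx (_ : (k + k.+2 = k.+1.*2)%N); last by rewrite -addnn; lia.
rewrite num e4 /central_binomial_ratio (doubleS k.+1) (binS k.+1.*2.+1 k.+1).
by rewrite bin_odd_middle natrD (exprS _ k.+1); field.
Qed.
End BinomialWindow.

Section KrasnoselskiiMann.
Variables (R : numFieldType) (T : Type) (d : T -> T -> R) (mid : T -> T -> T).
Hypothesis d_sym : forall p q, d p q = d q p.
Hypothesis d_refl : forall p, d p p = 0.
Hypothesis d_mid : forall p q1 q2, d p (mid q1 q2) <= 2^-1 * d p q1 + 2^-1 * d p q2.

Variables (x y : nat -> T) (D : R).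
Hypothesis x_S : forall k, x k.+1 = mid (x k) (y k).
Hypothesis y_nonexpansive : forall i j, d (y i) (y j) <= d (x i) (x j).
Hypothesis y_near_x0 : forall j, d (y j) (x 0) <= D.

(* Simultaneous induction on the weight [2 (a + b)] (plus one for the
   [y]-bounds), which decreases along the recursion [km_xxS]. *)
Lemma km_dist_le N :
  (forall a b, (a <= b)%N -> (2 * (a + b) <= N)%N ->
     d (x a) (x b) <= D * km_xx R a b) /\
  (forall c a, (a <= c)%N -> (2 * (c + a) < N)%N ->
     d (y c) (x a) <= D * km_yx R c a).
Proof.
have avg_le u v p q : u <= D * p -> v <= D * q ->
    2^-1 * u + 2^-1 * v <= D * (2^-1 * p + 2^-1 * q).
  by move=> up vq; rewrite mulrDr !(mulrCA D); apply: lerD; apply: ler_wpM2l.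
elim: N => [|N [IHx IHy]]; split => //.
- by move=> [|a] [|b] //= _ _; rewrite d_refl km_xx_refl mulr0.
- move=> a b ab N1; have [->|ab'] := eqVneq a b.
    by rewrite d_refl km_xx_refl mulr0.
  case: b ab ab' N1 => [|b] ab ab' N1; first by lia.
  rewrite x_S km_xxS; apply: le_trans (d_mid _ _ _) (avg_le _ _ _ _ _ _).
    by apply: IHx => //; lia.
  by rewrite d_sym; apply: IHy => //; lia.
- move=> c [|a] ac N1 /=; first by rewrite mulr1.
  rewrite x_S km_xxS addrC; apply: le_trans (d_mid _ _ _) (avg_le _ _ _ _ _ _).
    by apply: IHy => //; lia.
  by rewrite (le_trans (y_nonexpansive _ _)) // d_sym; apply: IHx => //; lia.
Qed.

Lemma km_residual_le k : d (y k) (x k) <= D * (2 * central_binomial_ratio R k.+1).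
Proof.
by rewrite -km_yx_diag; apply: (proj2 (km_dist_le (2 * (k + k)).+1)).
Qed.
End KrasnoselskiiMann.

Section Wallis.
Variable R : realType.

(* A primitive of [sin ^+ n], following the reduction formula
   [int sin^(m+2) = (m+1)/(m+2) int sin^m - sin^(m+1) cos / (m+2)]. *)
Fixpoint sin_pow_primitive (n : nat) : R -> R :=
  match n with
  | 0%N => id
  | 1%N => - (@cos R)
  | m.+2 => (m.+1%:R / m.+2%:R) \*: sin_pow_primitive m
            - m.+2%:R^-1 \*: ((@sin R) ^+ m.+1 * (@cos R))
  end.

Lemma is_derive_sin_pow_primitive n (x : R) :
  is_derive x 1 (sin_pow_primitive n) (sin x ^+ n).
Proof.
suff : is_derive x 1 (sin_pow_primitive n) (sin x ^+ n) /\
       is_derive x 1 (sin_pow_primitive n.+1) (sin x ^+ n.+1) by case.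
elim: n => [|n [IH0 IH1]].
  by split; apply: is_derive_eq; rewrite ?expr0 ?expr1 ?opprK.
split => //; apply: is_derive_eq; rewrite /= !fctE /GRing.scale /=.
have cos2 : cos x * cos x = 1 - sin x * sin x.
  by rewrite -(cos2Dsin2 x) !expr2 addrK.
rewrite !exprS; set k : R := n.+1%:R; set s := sin x ^+ n.
rewrite (_ : cos x * (k * s * cos x) = k * s * (cos x * cos x)); last by ring.
by rewrite cos2 -natr1 -/k; field.
Qed.

Definition wallis_integral (n : nat) : R :=
  sin_pow_primitive n (pi / 2) - sin_pow_primitive n 0.

Lemma wallis_integral0 : wallis_integral 0 = pi / 2.
Proof. by rewrite /wallis_integral /= subr0. Qed.

Lemma wallis_integral1 : wallis_integral 1 = 1.
Proof.
by rewrite /wallis_integral /= !fctE cos_pihalf cos0 oppr0 opprK add0r.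
Qed.

Lemma wallis_integralSS m :
  wallis_integral m.+2 = (m.+1%:R / m.+2%:R) * wallis_integral m.
Proof.
rewrite /wallis_integral /= /GRing.scale_fun !fctE cos_pihalf sin0 expr0n /=.
by rewrite /GRing.scale /= !mul0r !mulr0 !subr0 mulrBr.
Qed.

Lemma wallis_integral_even_le_odd m :
  wallis_integral m.*2.+2 <= wallis_integral m.*2.+1.
Proof.
rewrite -subr_ge0.
have -> : wallis_integral m.*2.+1 - wallis_integral m.*2.+2 =
    (sin_pow_primitive m.*2.+1 - sin_pow_primitive m.*2.+2) (pi / 2) -
    (sin_pow_primitive m.*2.+1 - sin_pow_primitive m.*2.+2) 0.
  by rewrite /wallis_integral !fctE; ring.
have dF (x : R) : is_derive x 1
    (sin_pow_primitive m.*2.+1 - sin_pow_primitive m.*2.+2)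
    (sin x ^+ m.*2.+1 - sin x ^+ m.*2.+2).
  by apply: is_deriveB; apply: is_derive_sin_pow_primitive.
have pi2 : 0 <= pi / 2 :> R by rewrite divr_ge0 ?pi_ge0.
rewrite subr_ge0; apply: (@ger0_derive1_ndecr _ _ 0 (pi / 2)) => //.
- move=> x; rewrite in_itv /= => /andP[x0 xpi].
  have sx0 : 0 < sin x by apply: sin_gt0_pihalf; rewrite x0 xpi.
  rewrite derive1E derive_val.
  have -> : sin x ^+ m.*2.+1 - sin x ^+ m.*2.+2 = sin x ^+ m.*2.+1 * (1 - sin x).
    by rewrite [in X in _ - X]exprSr; ring.
  by rewrite mulr_ge0 // ?subr_ge0 ?sin_le1 // exprn_ge0 // ltW.
- by apply: derivable_within_continuous => x _; have [] := dF x.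
Qed.

Lemma wallis_integral_even m :
  wallis_integral m.*2 = pi / 2 * central_binomial_ratio R m.
Proof.
elim: m => [|m IH].
  by rewrite wallis_integral0 /central_binomial_ratio bin0 expr0 divr1 mulr1.
by rewrite doubleS wallis_integralSS IH central_binomial_ratioS; ring.
Qed.

Lemma wallis_integral_odd m :
  wallis_integral m.*2.+1 * (m.*2.+1%:R * central_binomial_ratio R m) = 1.
Proof.
elim: m => [|m IH].
  by rewrite wallis_integral1 /central_binomial_ratio /= bin0 expr0 divr1 !mul1r.
rewrite doubleS wallis_integralSS central_binomial_ratioS -[RHS]IH.
field; by rewrite -!natrD !pnatr_eq0.
Qed.

Lemma central_binomial_ratio_le m :
  central_binomial_ratio R m.+1 <= (Num.sqrt (pi * m.+1%:R))^-1.
Proof.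
set c := central_binomial_ratio R m.+1.
have c0 : 0 < c := central_binomial_ratio_gt0 R m.+1.
have pm0 : 0 < pi * m.+1%:R :> R by rewrite mulr_gt0 ?pi_gt0 ?ltr0n.
have e : m.*2.+1%:R * central_binomial_ratio R m = 2 * m.+1%:R * c.
  rewrite /c central_binomial_ratioS.
  have -> : m.*2.+2%:R = 2 * m.+1%:R :> R by rewrite -natrM mul2n doubleS.
  by field; rewrite addrC natr1 pnatr_eq0.
have wallis : pi * c ^+ 2 * m.+1%:R <= 1.
  have := wallis_integral_even_le_odd m.
  rewrite -doubleS wallis_integral_even -/c => H.
  rewrite -[X in _ <= X](wallis_integral_odd m) e.
  rewrite (_ : pi * c ^+ 2 * m.+1%:R = pi / 2 * c * (2 * m.+1%:R * c)); last by field.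
  by rewrite ler_wpM2r // mulr_ge0 ?ltW // mulr_ge0 ?ler0n.
rewrite -(sqrtrV (ltW pm0)) -[c](ger0_norm (ltW c0)) -sqrtr_sqr.
rewrite ler_sqrt ?invr_ge0 ?(ltW pm0) // -(ler_pM2r pm0) mulVf ?gt_eqF //.
by rewrite mulrA (mulrC _ pi).
Qed.

End Wallis.

Section SupNorm.
Variables (R : realType) (n : nat).
Implicit Types (u v w : 'I_n -> R).

Definition sup_dist u v := supnorm (fun s => u s - v s).

Definition midpoint u v (s : 'I_n) : R := 2^-1 * u s + 2^-1 * v s.

Lemma ler_supnorm v s : `|v s| <= supnorm v.
Proof. exact: (le_bigmax _ (fun s => `|v s|)). Qed.

Lemma supnorm_le v c : 0 <= c -> (forall s, `|v s| <= c) -> supnorm v <= c.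
Proof. by move=> c0 vc; apply: bigmax_le. Qed.

Lemma supnorm_ge0 v : 0 <= supnorm v.
Proof. by apply: (big_ind (fun x => 0 <= x)) => // x y; rewrite le_max => ->. Qed.

Lemma sup_distC u v : sup_dist u v = sup_dist v u.
Proof. by apply: eq_bigr => s _; rewrite distrC. Qed.

Lemma sup_distxx u : sup_dist u u = 0.
Proof.
apply/le_anti; rewrite supnorm_ge0 andbT.
by apply: supnorm_le => // s; rewrite subrr normr0.
Qed.

Lemma sup_dist_midpoint w u v :
  sup_dist w (midpoint u v) <= 2^-1 * sup_dist w u + 2^-1 * sup_dist w v.
Proof.
apply: supnorm_le => [|s]; first by rewrite addr_ge0 // mulr_ge0 // supnorm_ge0.
rewrite (_ : w s - midpoint u v s = 2^-1 * (w s - u s) + 2^-1 * (w s - v s)).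
  apply: le_trans (ler_normD _ _) _; rewrite !normrM ger0_norm //.
  apply: lerD; apply: ler_wpM2l => //.
    exact: (ler_supnorm (fun t => w t - u t)).
  exact: (ler_supnorm (fun t => w t - v t)).
by rewrite /midpoint; field.
Qed.
End SupNorm.

Section Liminf.
Variable R : realType.
Implicit Types (u : nat -> R).

Lemma eventually_divr_nat_le (M e : R) : 0 <= M -> 0 < e ->
  exists N, forall T, (N <= T)%N -> M / T%:R <= e.
Proof.
move=> M0 e0; exists (Num.truncn (M / e)).+1 => T NT.
have T0 : 0 < T%:R :> R by rewrite ltr0n (leq_trans _ NT).
rewrite ler_pdivrMr // mulrC -ler_pdivrMr //; apply: ltW.
by apply: lt_le_trans (truncnS_gt _) _; rewrite ler_nat.
Qed.

Lemma limn_inf_ge_eventually u l : bounded_fun u ->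
  (forall e, 0 < e -> exists N, forall k, (N <= k)%N -> l - e <= u k) ->
  l <= limn_inf u.
Proof.
move=> bu ul; rewrite limn_infE //; apply/ler_addgt0Pr => e e0.
have [N uN] := ul e e0; rewrite -lerBlDr.
have le_infs : l - e <= infs u N.
  apply: lb_le_inf; first by exists (u N), N => /=.
  by move=> _ [k /= Nk <-]; apply: uN.
apply: le_trans le_infs _; apply: ub_le_sup; last by exists N.
exact: bounded_fun_has_ubound_infs.
Qed.

Lemma limn_inf_le_frequently u l : bounded_fun u ->
  (forall e, 0 < e -> forall N, exists2 k, (N <= k)%N & u k <= l + e) ->
  limn_inf u <= l.
Proof.
move=> bu ul; rewrite limn_infE //.
apply: ge_sup; first by exists (infs u 0), 0%N.
move=> _ [N _ <-]; apply/ler_addgt0Pr => e e0.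
have [k Nk uk] := ul e e0 N; apply: le_trans uk.
by apply: ge_inf; [exact/has_lbound_sdrop/bounded_fun_has_lbound | exists k].
Qed.

Lemma limn_inf_dist_le u l E M : bounded_fun u -> 0 <= M ->
  (forall T, (0 < T)%N -> `|u T - l| <= E + M / T%:R) ->
  `|limn_inf u - l| <= E.
Proof.
move=> bu M0 ul; have near_l e : 0 < e -> exists N, forall T, (N <= T)%N ->
    l - E - e <= u T <= l + E + e.
  move=> e0; have [N MN] := eventually_divr_nat_le M0 e0.
  exists (maxn N 1) => T; rewrite geq_max => /andP[NT T0].
  have := ul T T0; have := MN T NT; rewrite ler_distl; lra.
rewrite ler_distl; apply/andP; split.
  apply: limn_inf_ge_eventually => // e /near_l[N uN]; exists N => k Nk.
  by case/andP: (uN k Nk).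
apply: limn_inf_le_frequently => // e /near_l[N uN] K.
exists (maxn N K); first exact: leq_maxr.
by case/andP: (uN _ (leq_maxl N K)).
Qed.

Lemma ler_norm_average (u : nat -> R) B T : (forall t, `|u t| <= B) -> 0 <= B ->
  `|T%:R^-1 * \sum_(t < T) u t| <= B.
Proof.
move=> uB B0; case: T => [|T]; first by rewrite big_ord0 mulr0 normr0.
rewrite normrM ger0_norm ?invr_ge0 ?ler0n // ler_pdivrMl ?ltr0n //.
apply: le_trans (ler_norm_sum _ _ _) _.
have -> : T.+1%:R * B = \sum_(t < T.+1) B by rewrite sumr_const card_ord mulr_natl.
by apply: ler_sum => t _; apply: uB.
Qed.
End Liminf.

Section FiniteMax.
Variables (R : realType) (A : finType) (a0 : A).
Implicit Types (f w : A -> R).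

Lemma amax_ge f a : f a <= amax a0 f.
Proof. exact: (le_bigmax _ f). Qed.

Lemma amax_attained f : exists a, amax a0 f = f a.
Proof.
apply: (big_ind (fun x => exists a, x = f a)); first by exists a0.
  by move=> _ _ [a ->] [b ->]; case: (leP (f a) (f b)); [exists b | exists a].
by move=> a _; exists a.
Qed.

Lemma sum_indicator_mul (c : A) (F : A -> R) : \sum_a (a == c)%:R * F a = F c.
Proof.
rewrite (bigD1 c) //= eqxx mul1r big1 ?addr0 // => a /negbTE ->.
by rewrite mul0r.
Qed.

Lemma exists_weight_neq0 w : \sum_a w a = 1 -> exists a, w a != 0.
Proof.
move=> w1; apply/not_existsP => w0.
have : \sum_a w a = 0 by apply: big1 => a _; apply/eqP/negP => /negP /(w0 a).
by rewrite w1 => /eqP; rewrite oner_eq0.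
Qed.

Lemma convex_comb_eq_max w f M : (forall a, 0 <= w a) -> \sum_a w a = 1 ->
  (forall a, f a <= M) -> \sum_a w a * f a = M -> forall a, w a != 0 -> f a = M.
Proof.
move=> w0 w1 fM wfM a wa.
have gap0 : \sum_b w b * (M - f b) = 0.
  under eq_bigr do rewrite mulrBr.
  by rewrite sumrB -mulr_suml w1 mul1r wfM subrr.
have gap_ge0 b : true -> 0 <= w b * (M - f b) by rewrite mulr_ge0 // subr_ge0.
have /eqP := psumr_eq0P gap_ge0 gap0 (i := a) isT.
by rewrite mulf_eq0 (negbTE wa) subr_eq0 => /eqP ->.
Qed.
End FiniteMax.

Section MDP.
Variables (R : realType) (n : nat) (A : finType) (a0 : A).
Variables (P : 'I_n -> A -> 'I_n -> R) (r : 'I_n -> A -> R).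
Hypothesis hP : is_transition P.
Implicit Types (u v V : 'I_n -> R).

Definition next_value s a V : R := \sum_(s' : 'I_n) P s a s' * V s'.

Definition qvalue V s a : R := r s a + next_value s a V.

Lemma ToptE V s : Topt P r a0 V s = amax a0 (qvalue V s).
Proof. by []. Qed.

Lemma next_valueD s a u v :
  next_value s a (fun x => u x + v x) = next_value s a u + next_value s a v.
Proof. by rewrite /next_value -big_split; apply: eq_bigr => x _; rewrite mulrDr. Qed.

Lemma next_valueB s a u v :
  next_value s a (fun x => u x - v x) = next_value s a u - next_value s a v.
Proof. by rewrite /next_value -sumrB; apply: eq_bigr => x _; rewrite mulrBr. Qed.

Lemma next_valueZ s a c u : next_value s a (fun x => c * u x) = c * next_value s a u.
Proof. by rewrite /next_value mulr_sumr; apply: eq_bigr => x _; rewrite mulrCA. Qed.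

Lemma next_value_cst s a c : next_value s a (fun _ => c) = c.
Proof. by rewrite /next_value -mulr_suml (proj2 hP) mul1r. Qed.

Lemma next_value_norm s a u : `|next_value s a u| <= supnorm u.
Proof.
apply: le_trans (ler_norm_sum _ _ _) _; rewrite -[supnorm u](next_value_cst s a).
apply: ler_sum => x _; rewrite normrM ger0_norm ?(proj1 hP) //.
by apply: ler_wpM2l; [exact: (proj1 hP) | exact: ler_supnorm].
Qed.

Lemma next_value_dist s a u v :
  `|next_value s a u - next_value s a v| <= sup_dist u v.
Proof. by rewrite -next_valueB; apply: next_value_norm. Qed.

Lemma Ppi_next_value pi V s : Ppi P pi V s = \sum_a pi s a * next_value s a V.
Proof.
rewrite /Ppi /next_value; under eq_bigr do rewrite mulr_suml.
rewrite exchange_big /=; apply: eq_bigr => a _; rewrite mulr_sumr.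
by apply: eq_bigr => x _; rewrite mulrA.
Qed.

Lemma Tpi_qvalue pi V s : Tpi P r pi V s = \sum_a pi s a * qvalue V s a.
Proof.
rewrite /Tpi Ppi_next_value /rpi -big_split; apply: eq_bigr => a _.
by rewrite /qvalue mulrDr.
Qed.

Section PolicyIterates.
Variable pi : 'I_n -> A -> R.
Hypothesis pi_policy : is_policy pi.
Local Notation Pk t := (iter t (Ppi P pi)).

Lemma PpiD u v s : Ppi P pi (fun x => u x + v x) s = Ppi P pi u s + Ppi P pi v s.
Proof.
rewrite !Ppi_next_value -big_split; apply: eq_bigr => a _.
by rewrite next_valueD mulrDr.
Qed.

Lemma PpiB u v s : Ppi P pi (fun x => u x - v x) s = Ppi P pi u s - Ppi P pi v s.
Proof.
rewrite !Ppi_next_value -sumrB; apply: eq_bigr => a _.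
by rewrite next_valueB mulrBr.
Qed.

Lemma Ppi_norm u s : `|Ppi P pi u s| <= supnorm u.
Proof.
have [pi0 pi1] := pi_policy.
rewrite Ppi_next_value -[supnorm u]mul1r -(pi1 s) mulr_suml.
apply: le_trans (ler_norm_sum _ _ _) _; apply: ler_sum => a _.
by rewrite normrM ger0_norm // ler_wpM2l // next_value_norm.
Qed.

Lemma iter_PpiD t u v s : Pk t (fun x => u x + v x) s = Pk t u s + Pk t v s.
Proof.
elim: t s => [//|t IH] s; rewrite !iterS -PpiD.
by apply: eq_bigr => x _; rewrite IH.
Qed.

Lemma iter_PpiB t u v s : Pk t (fun x => u x - v x) s = Pk t u s - Pk t v s.
Proof.
elim: t s => [//|t IH] s; rewrite !iterS -PpiB.
by apply: eq_bigr => x _; rewrite IH.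
Qed.

Lemma iter_Ppi_fixed t u : Ppi P pi u = u -> Pk t u = u.
Proof. by move=> Pu; elim: t => [//|t IH]; rewrite iterS IH. Qed.

Lemma iter_Ppi_norm t u s : `|Pk t u s| <= supnorm u.
Proof.
elim: t s => [|t IH] s; first exact: ler_supnorm.
rewrite iterS; apply: le_trans (Ppi_norm _ _) _.
by apply: supnorm_le; [exact: supnorm_ge0 | exact: IH].
Qed.

(* With [E := T^pi V - V - g], [r^pi = g + E + (V - P^pi V)] telescopes. *)
Lemma ergodic_sum_decomposition g V T s : Ppi P pi g = g ->
  \sum_(t < T) Pk t (rpi r pi) s =
  T%:R * g s + \sum_(t < T) Pk t (fun x => Tpi P r pi V x - V x - g x) s
  + (V s - Pk T V s).
Proof.
move=> Pg.
have -> : V s - Pk T V s = \sum_(t < T) (Pk t V s - Pk t.+1 V s).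
  elim: T => [|T IH]; first by rewrite big_ord0 subrr.
  by rewrite big_ord_recr /= -IH; ring.
have -> : T%:R * g s = \sum_(t < T) g s by rewrite sumr_const card_ord mulr_natl.
rewrite -!big_split; apply: eq_bigr => t _ /=.
pose E x := Tpi P r pi V x - V x - g x.
have -> : rpi r pi = fun x => (g x + E x) + (V x - Ppi P pi V x).
  by apply/funext => x; rewrite /E /Tpi; ring.
rewrite (iter_PpiD t (fun x => g x + E x)) (iter_PpiD t g E).
by rewrite (iter_PpiB t V (Ppi P pi V)) iter_Ppi_fixed // -iterSr.
Qed.

Lemma ergodic_average_dist_le g V T s : Ppi P pi g = g -> (0 < T)%N ->
  `|T%:R^-1 * \sum_(t < T) Pk t (rpi r pi) s - g s| <=
  supnorm (fun x => Tpi P r pi V x - V x - g x) + 2 * supnorm V / T%:R.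
Proof.
move=> Pg T0; rewrite (ergodic_sum_decomposition V T s Pg).
set S := \sum_(t < T) _.
have T0' : T%:R != 0 :> R by rewrite pnatr_eq0 -lt0n.
rewrite (_ : _ - g s = T%:R^-1 * S + (V s - Pk T V s) / T%:R); last by field.
apply: le_trans (ler_normD _ _) _; apply: lerD.
  apply: (ler_norm_average
    (u := fun t => Pk t (fun x => Tpi P r pi V x - V x - g x) s)).
    by move=> t; apply: iter_Ppi_norm.
  exact: supnorm_ge0.
rewrite normrM normfV normr_nat ler_wpM2r ?invr_ge0 ?ler0n //.
have := ler_normB (V s) (Pk T V s); have := ler_supnorm V s.
have := iter_Ppi_norm T V s; lra.
Qed.

Lemma gpi_dist_le g V : Ppi P pi g = g ->
  supnorm (fun s => g s - gpi P r pi s) <=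
  supnorm (fun s => Tpi P r pi V s - V s - g s).
Proof.
move=> Pg; apply: supnorm_le => [|s]; first exact: supnorm_ge0.
rewrite distrC; apply: (limn_inf_dist_le (M := 2 * supnorm V)).
- exists (supnorm (rpi r pi)); split; first exact: num_real.
  move=> B rB T _ /=; apply: le_trans (ltW rB).
  apply: (ler_norm_average (u := fun t => Pk t (rpi r pi) s)).
    by move=> t; apply: iter_Ppi_norm.
  exact: supnorm_ge0.
- by rewrite mulr_ge0 ?supnorm_ge0.
- by move=> T; apply: ergodic_average_dist_le.
Qed.
End PolicyIterates.

Variables (g h V0 : 'I_n -> R).
Hypothesis hB : modified_bellman P r a0 g h.

Lemma next_value_g_le s a : next_value s a g <= g s.
Proof.
have [gmax _] := hB; rewrite -(gmax s).
exact: (amax_ge a0 (fun a => next_value s a g)).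
Qed.

Lemma qvalue_h_le s a : qvalue h s a <= h s + g s.
Proof. by have [_ [hmax _]] := hB; rewrite -(hmax s); apply: amax_ge. Qed.

Lemma exists_bellman_action s :
  exists b, next_value s b g = g s /\ qvalue h s b = h s + g s.
Proof.
have [gmax [hmax [pi [[pi0 pi1] [Pg Th]]]]] := hB.
have [b pib] := exists_weight_neq0 (pi1 s); exists b; split.
  apply: (convex_comb_eq_max (w := pi s) (f := fun a => next_value s a g)) => //.
    exact: next_value_g_le.
  by rewrite -Ppi_next_value Pg gmax.
apply: (convex_comb_eq_max (w := pi s) (f := qvalue h s)) => //.
  exact: qvalue_h_le.
by rewrite -Tpi_qvalue Th hmax.
Qed.

Local Notation V := (RVI P r a0 V0).

Definition shifted_RVI k s : R := V k s - k%:R / 2 * g s.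

Definition shifted_Bellman k s : R := Topt P r a0 (V k) s - k%:R / 2 * g s - g s.

Local Notation W := shifted_RVI.
Local Notation Y := shifted_Bellman.

Lemma shifted_RVI0 : W 0 = V0.
Proof. by apply/funext => s; rewrite /W mul0r mul0r subr0. Qed.

Lemma shifted_RVIS k : W k.+1 = midpoint (W k) (Y k).
Proof.
apply/funext => s; rewrite /W /Y /midpoint /RVI iterS -/(RVI P r a0 V0 k).
by rewrite -natr1; field.
Qed.

Lemma next_value_RVI k s a :
  next_value s a (V k) = next_value s a (W k) + k%:R / 2 * next_value s a g.
Proof.
rewrite -next_valueZ -next_valueD; apply: eq_bigr => x _.
by rewrite /W subrK.
Qed.

Lemma shifted_Bellman_dist k s : `|Y k s - h s| <= sup_dist (W k) h.
Proof.
have k0 : 0 <= k%:R / 2 :> R by rewrite divr_ge0.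
rewrite /Y ler_distl; apply/andP; split.
  have [b [bg bh]] := exists_bellman_action s.
  have := amax_ge a0 (qvalue (V k) s) b; rewrite -ToptE /qvalue next_value_RVI bg.
  have := next_value_dist s b (W k) h; rewrite ler_distl /qvalue in bh *.
  case/andP; lra.
rewrite ToptE; have [a ->] := amax_attained a0 (qvalue (V k) s).
rewrite /qvalue next_value_RVI.
have := qvalue_h_le s a; have := next_value_dist s a (W k) h.
have : k%:R / 2 * next_value s a g <= k%:R / 2 * g s.
  by apply: ler_wpM2l => //; apply: next_value_g_le.
rewrite ler_distl /qvalue => ? /andP[? ?]; lra.
Qed.

Lemma sup_dist_shifted_Bellman_le k : sup_dist (Y k) h <= sup_dist (W k) h.
Proof. by apply: supnorm_le; [exact: supnorm_ge0 | exact: shifted_Bellman_dist]. Qed.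

Lemma shifted_RVI_dist_le k : sup_dist (W k) h <= sup_dist V0 h.
Proof.
elim: k => [|k IH]; first by rewrite shifted_RVI0.
rewrite shifted_RVIS sup_distC; apply: le_trans (sup_dist_midpoint _ _ _) _.
rewrite !(sup_distC h); have := sup_dist_shifted_Bellman_le k; lra.
Qed.

Definition preserves_g s a : bool := next_value s a g == g s.

Definition policy_of (c : 'I_n -> A) (s : 'I_n) (a : A) : R := (a == c s)%:R.

Lemma policy_of_deterministic c : is_deterministic (policy_of c).
Proof.
split; last by move=> s; exists (c s).
split=> [s a|s]; first by rewrite /policy_of ler0n.
rewrite -[RHS](sum_indicator_mul (c s) (fun=> 1 : R)).
by apply: eq_bigr => a _; rewrite mulr1.
Qed.

Lemma Ppi_policy_of c u s : Ppi P (policy_of c) u s = next_value s (c s) u.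
Proof. by rewrite Ppi_next_value sum_indicator_mul. Qed.

Lemma Ppi_deterministic pi u s :
  is_deterministic pi -> exists a, Ppi P pi u s = next_value s a u.
Proof.
move=> [_ pi_det]; have [c pic] := pi_det s; exists c.
by rewrite Ppi_next_value; under eq_bigr do rewrite pic; rewrite sum_indicator_mul.
Qed.

Lemma g_gap_ge0 s a : 0 <= g s - next_value s a g.
Proof. by rewrite subr_ge0 next_value_g_le. Qed.

Lemma g_gap_norm s a : `|next_value s a g - g s| = g s - next_value s a g.
Proof. by rewrite distrC ger0_norm // g_gap_ge0. Qed.

(* Switching a Bellman-optimal deterministic policy to [a] at [s] only moves
   [P^pi g] at [s], by the gap of [a]. *)
Lemma eps_gap_le_gap s a :
  ~~ preserves_g s a -> (eps_gap P g <= (g s - next_value s a g)%:E)%E.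
Proof.
move=> a_gap.
have [c cg] : {c : 'I_n -> A & forall x, next_value x (c x) g = g x}.
  apply: (@boolp.choice _ _ (fun x b => next_value x b g = g x)) => x.
  by have [b [bg _]] := exists_bellman_action x; exists b.
pose pi := policy_of (fun x => if x == s then a else c x).
apply: (@le_trans _ _ (supnorm (fun x => Ppi P pi g x - g x))%:E).
  apply: ereal_inf_lbound; exists pi => //; split; first exact: policy_of_deterministic.
  move=> /(congr1 (fun f => f s)); rewrite Ppi_policy_of eqxx => sa.
  by rewrite /preserves_g sa eqxx in a_gap.
rewrite lee_fin; apply: supnorm_le => [|x]; first exact: g_gap_ge0.
rewrite Ppi_policy_of; case: eqP => [->|_]; first by rewrite g_gap_norm.
by rewrite cg subrr normr0 g_gap_ge0.
Qed.

Lemma eps_gap_ge0 : (0 <= eps_gap P g)%E.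
Proof.
by apply: le_ereal_inf_tmp => _ [pi _ <-]; rewrite lee_fin supnorm_ge0.
Qed.

Lemma eps_gap_gt0 e : eps_gap P g = e%:E -> 0 < e.
Proof.
move=> ge.
pose gap (p : 'I_n * A) := g p.1 - next_value p.1 p.2 g.
pose d := \big[Num.min/1]_(p : 'I_n * A | ~~ preserves_g p.1 p.2) gap p.
have d0 : 0 < d.
  apply: (big_ind (fun x => 0 < x)) => // [x y x0 y0|[s a] /= a_gap].
    by rewrite lt_min x0.
  rewrite /gap /= lt_def g_gap_ge0 andbT.
  by apply: contraNN a_gap; rewrite /preserves_g subr_eq0 eq_sym.
suff : (d%:E <= e%:E)%E by rewrite lee_fin; apply: lt_le_trans.
rewrite -ge; apply: le_ereal_inf_tmp => _ [pi [pi_det Pg] <-].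
have [s Pgs] : exists s, Ppi P pi g s != g s.
  apply/not_existsP => Pg_eq; apply: Pg; apply/funext => s.
  by apply/eqP/negP => /negP /(Pg_eq s).
have [a Pa] := Ppi_deterministic g s pi_det.
rewrite lee_fin; apply: le_trans (ler_supnorm _ s); rewrite Pa g_gap_norm.
have a_gap : ~~ preserves_g s a by rewrite /preserves_g -Pa.
exact: (bigmin_le_cond (P := fun p : 'I_n * A => ~~ preserves_g p.1 p.2) 1 gap
  (j := (s, a)) a_gap).
Qed.

Lemma eps_gap_all_preserved : (forall s a, preserves_g s a) -> eps_gap P g = +oo%E.
Proof.
move=> pres; rewrite /eps_gap; set S := (X in ereal_inf X).
suff -> : S = set0 by rewrite ereal_inf0.
apply/seteqP; split => // y [pi [[[_ pi1] _] Pg] _]; exfalso; apply: Pg.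
apply/funext => s; rewrite Ppi_next_value.
by under eq_bigr do rewrite (eqP (pres s _)); rewrite -mulr_suml pi1 mul1r.
Qed.

Lemma eps_gap_le e : eps_gap P g = e%:E -> e <= 2 * supnorm g.
Proof.
move=> ge.
have [[s a] /= a_gap] : exists p : 'I_n * A, ~~ preserves_g p.1 p.2.
  apply/not_existsP => all_pres; move: ge; rewrite eps_gap_all_preserved //.
  by move=> s a; apply/negPn/negP => /(all_pres (s, a)).
apply: le_trans (_ : g s - next_value s a g <= _).
  by move: (eps_gap_le_gap a_gap); rewrite ge lee_fin.
have := ler_supnorm g s; have := next_value_norm s a g.
by rewrite !ler_norml => /andP[? _] /andP[_ ?]; lra.
Qed.

(* A greedy action losing [e] on [g] at [V j] costs [j e / 2], while [W j]
   can compensate at most [2 * sup_dist V0 h]. *)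
Definition settled (j : nat) : Prop := eps_gap P g = +oo%E \/
  exists2 e, eps_gap P g = e%:E & 4 * sup_dist V0 h < j%:R * e.

Lemma greedy_preserves_g j s a : settled j ->
  qvalue (V j) s a = Topt P r a0 (V j) s -> preserves_g s a.
Proof.
move=> j_settled a_greedy; apply/negPn/negP => a_gap.
have [e ge je] : exists2 e, eps_gap P g = e%:E & 4 * sup_dist V0 h < j%:R * e.
  by case: j_settled => // ge; move: (eps_gap_le_gap a_gap); rewrite ge.
have e_gap : e <= g s - next_value s a g.
  by move: (eps_gap_le_gap a_gap); rewrite ge lee_fin.
have [b [bg bh]] := exists_bellman_action s.
have := amax_ge a0 (qvalue (V j) s) b.
rewrite -ToptE -a_greedy /qvalue !next_value_RVI bg.
have := qvalue_h_le s a; rewrite /qvalue in bh *.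
have := next_value_dist s a (W j) h; have := next_value_dist s b (W j) h.
rewrite !ler_distl => /andP[? ?] /andP[? ?].
have := shifted_RVI_dist_le j.
have : j%:R / 2 * e <= j%:R / 2 * (g s - next_value s a g).
  by apply: ler_wpM2l => //; rewrite divr_ge0.
rewrite mulrBr; lra.
Qed.

Lemma greedy_policy_fixes_g j pi : settled j -> is_policy pi ->
  Tpi P r pi (V j) = Topt P r a0 (V j) -> Ppi P pi g = g.
Proof.
move=> j_settled [pi0 pi1] pi_greedy; apply/funext => s.
rewrite Ppi_next_value -[RHS]mul1r -(pi1 s) mulr_suml; apply: eq_bigr => a _.
have [->|pia] := eqVneq (pi s a) 0; first by rewrite !mul0r.
congr (_ * _); apply/eqP; apply: (greedy_preserves_g j_settled).
apply: (convex_comb_eq_max (w := pi s) (f := qvalue (V j) s)) => //.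
  by move=> b; apply: amax_ge.
by rewrite -Tpi_qvalue pi_greedy.
Qed.

Lemma shifted_Bellman_sub_le i j s : settled i ->
  Y i s - Y j s <= sup_dist (W i) (W j).
Proof.
move=> i_settled; rewrite /Y !ToptE.
have [a ai] := amax_attained a0 (qvalue (V i) s).
have ag := greedy_preserves_g i_settled (esym ai).
have := amax_ge a0 (qvalue (V j) s) a.
rewrite ai /qvalue !next_value_RVI (eqP ag).
have := next_value_dist s a (W i) (W j); rewrite ler_distl => /andP[_ ?]; lra.
Qed.

Lemma shifted_Bellman_dist_le i j : settled i -> settled j ->
  sup_dist (Y i) (Y j) <= sup_dist (W i) (W j).
Proof.
move=> i_settled j_settled; apply: supnorm_le => [|s]; first exact: supnorm_ge0.
rewrite ler_norml shifted_Bellman_sub_le // andbT sup_distC.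
by have := shifted_Bellman_sub_le i s j_settled; lra.
Qed.

Lemma shifted_Bellman_dist_start_le j m :
  sup_dist (Y j) (W m) <= 2 * sup_dist V0 h.
Proof.
apply: supnorm_le => [|s]; first by rewrite mulr_ge0 ?supnorm_ge0.
have := shifted_Bellman_dist j s; have := ler_supnorm (fun s => W m s - h s) s.
have := shifted_RVI_dist_le j; have := shifted_RVI_dist_le m.
rewrite /sup_dist; set Yh := Y j s - h s; set Wh := W m s - h s.
rewrite (_ : Y j s - W m s = Yh - Wh); last by rewrite /Yh /Wh; ring.
have := ler_normB Yh Wh; lra.
Qed.

Lemma rnorm_ge0 : 0 <= rnorm r.
Proof.
apply: (big_ind (fun x => 0 <= x)) => // [x y|s _]; first by rewrite le_max => ->.
by apply: (big_ind (fun x => 0 <= x)) => // x y; rewrite le_max => ->.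
Qed.

Lemma exists_settling_time :
  exists m : nat, m%:R <= Kconst P r g h V0 /\ forall j, (m <= j)%N -> settled j.
Proof.
rewrite /Kconst /=; case ge: (eps_gap P g) => [e| |].
- have e0 := eps_gap_gt0 ge; have e_le := eps_gap_le ge.
  set C := (X in X / e).
  have C0 : 0 <= C / e.
    rewrite divr_ge0 ?(ltW e0) // /C.
    have := rnorm_ge0; have := supnorm_ge0 V0; have := supnorm_ge0 g.
    have := supnorm_ge0 (fun s => V0 s - h s); lra.
  exists (Num.truncn (C / e)); split; first by rewrite truncn_le.
  move=> j mj; right; exists e => //.
  have : C / e < j%:R + 1 by rewrite natr1 -truncn_lt_nat.
  rewrite ltr_pdivrMr // mulrDl mul1r /C => Cj.
  have := rnorm_ge0; have := supnorm_ge0 V0; have := supnorm_ge0 (fun s => V0 s - h s).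
  rewrite /sup_dist; lra.
- by exists 0%N; split => // j _; left.
- by have := eps_gap_ge0; rewrite ge.
Qed.

Lemma RVI_residual_le m i : (forall j, (m <= j)%N -> settled j) ->
  supnorm (fun s => Topt P r a0 (V (m + i)) s - V (m + i) s - g s) <=
  4 * sup_dist V0 h * central_binomial_ratio R i.+1.
Proof.
move=> settled_tail.
have x_S j : W (m + j.+1) = midpoint (W (m + j)) (Y (m + j)).
  by rewrite addnS shifted_RVIS.
have y_nonexp j1 j2 :
    sup_dist (Y (m + j1)) (Y (m + j2)) <= sup_dist (W (m + j1)) (W (m + j2)).
  by apply: shifted_Bellman_dist_le; apply: settled_tail; apply: leq_addr.
have y_near j : sup_dist (Y (m + j)) (W (m + 0)) <= 2 * sup_dist V0 h.
  exact: shifted_Bellman_dist_start_le.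
have := @km_residual_le R _ (@sup_dist R n) (@midpoint R n) (@sup_distC R n)
  (@sup_distxx R n) (@sup_dist_midpoint R n) (fun j => W (m + j)) (fun j => Y (m + j))
  (2 * sup_dist V0 h) x_S y_nonexp y_near i.
have -> : sup_dist (Y (m + i)) (W (m + i)) =
    supnorm (fun s => Topt P r a0 (V (m + i)) s - V (m + i) s - g s).
  by apply: eq_bigr => s _; rewrite /Y /W; congr `|_|; ring.
by rewrite mulrCA !mulrA -natrM.
Qed.
End MDP.

Theorem theorem1 (R : realType) (n : nat) (A : finType) (a0 : A)
  (P : 'I_n -> A -> 'I_n -> R) (r : 'I_n -> A -> R)
  (g h V0 : 'I_n -> R) (pik : nat -> 'I_n -> A -> R) :
  is_transition P ->
  modified_bellman P r a0 g h ->
  (forall k, is_policy (pik k) /\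
     Tpi P r (pik k) (RVI P r a0 V0 k) = Topt P r a0 (RVI P r a0 V0 k)) ->
  forall k : nat, Kconst P r g h V0 < k%:R ->
    supnorm (fun s => g s - gpi P r (pik k) s)
      <= supnorm (fun s => Topt P r a0 (RVI P r a0 V0 k) s - RVI P r a0 V0 k s - g s)
    /\ supnorm (fun s => Topt P r a0 (RVI P r a0 V0 k) s - RVI P r a0 V0 k s - g s)
      <= 4 * supnorm (fun s => V0 s - h s)
         / Num.sqrt (pi * (k%:R - Kconst P r g h V0)).
Proof.
move=> hP hB greedy k Kk; have [pik_policy pik_greedy] := greedy k.
have [m [mK settled_tail]] := exists_settling_time hP V0 hB.
have mk : (m <= k)%N by rewrite -(ler_nat R) ltW // (le_lt_trans mK).
split.
  rewrite -pik_greedy; apply: gpi_dist_le => //.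
  exact: (greedy_policy_fixes_g hP hB (settled_tail k mk) pik_policy pik_greedy).
rewrite -(subnKC mk); set i := (k - m)%N.
apply: le_trans (RVI_residual_le hP hB i settled_tail) _.
apply: ler_wpM2l; first by rewrite mulr_ge0 ?supnorm_ge0.
apply: le_trans (central_binomial_ratio_le R i) _.
have Kpos : 0 < (m + i)%:R - Kconst P r g h V0 by rewrite subr_gt0 subnKC.
rewrite lef_pV2 ?posrE ?sqrtr_gt0 ?mulr_gt0 ?pi_gt0 ?ltr0n //.
rewrite ler_sqrt ?mulr_ge0 ?pi_ge0 ?ler0n // ler_pM2l ?pi_gt0 //.
by rewrite natrD lerBlDl lerD // ler_nat.
Qed.
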